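(* Let $0\le\beta_1<\beta_2\le\pi$ and let $p=P_2(\beta_1,\beta_2)$, where $P_2(\beta_1,\beta_2)=(0,1)$ if $\beta_1<\frac{\pi}{2}<\beta_2$; $P_2(\beta_1,\beta_2)=P_1(\beta_1,\beta_2)$ if $\beta_2\le\frac{\pi}{2}$; and $P_2(\beta_1,\beta_2)=(-x,y)$ where $(x,y)=P_1(\pi-\beta_2,\pi-\beta_1)$ if $\beta_1\ge\frac{\pi}{2}$. Then the segment $e$ from $(0,0)$ to $p$ satisfies $\beta_1<slope(e)<\beta_2$.
   Context: Slope of the segment from $(0,0)$ to $p\ne(0,0)$: the angle (mod $2\pi$) of the counter-clockwise rotation taking the positive $x$-axis onto the half-line from the origin through $p$. Point rule $P_1(\theta_1,\theta_2)$ for $0\le\theta_1<\theta_2\le\frac{\pi}{2}$, with $d=\lceil\frac{1}{\theta_2-\theta_1}\rceil$: (i) if $\theta_2-\theta_1>\frac{\pi}{4}$: $(1,1)$; (ii) if $\arctan(\frac12)<\theta_2-\theta_1\le\frac{\pi}{4}$: $(1,2)$ if $\theta_1\ge\frac{\pi}{4}$, $(1,1)$ if $\arctan(\frac12)\le\theta_1<\frac{\pi}{4}$, $(2,1)$ if $\theta_1<\arctan(\frac12)$; (iii) if $\theta_2-\theta_1\le\arctan(\frac12)$: $(d,\lfloor\tan(\theta_1)d+1\rfloor)$ if $\theta_2\le\frac{\pi}{4}$, $(1,1)$ if $\theta_1<\frac{\pi}{4}<\theta_2$, $(\lfloor\tan(\frac{\pi}{2}-\theta_2)d+1\rfloor,d)$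 if $\theta_1\ge\frac{\pi}{4}$. *)

From Stdlib Require Import Reals ZArith.
Open Scope R_scope.

(* floor and ceiling as integers: up x is the unique integer with x < up x <= x+1 *)
Definition Zfloor (x : R) : Z := (up x - 1)%Z.
Definition Zceil (x : R) : Z := (- Zfloor (- x))%Z.

Definition pt := (Z * Z)%type.

(* slope of the segment from (0,0) to p <> (0,0): the angle theta in [0, 2*PI)
   of the counter-clockwise rotation taking the positive x-axis onto the
   half-line from the origin through p, i.e. p = |p| (cos theta, sin theta). *)
Definition is_slope (p : pt) (theta : R) : Prop :=
  0 <= theta < 2 * PI /\
  let x := IZR (fst p) in let y := IZR (snd p) in
  x = sqrt (x ^ 2 + y ^ 2) * cos theta /\ y = sqrt (x ^ 2 + y ^ 2) * sin theta.

(* Point rule P_1 (for 0 <= t1 < t2 <= PI/2). *)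
Definition P1 (t1 t2 : R) : pt :=
  let d := Zceil (1 / (t2 - t1)) in
  if Rlt_dec (PI / 4) (t2 - t1) then (1%Z, 1%Z)
  else if Rlt_dec (atan (1/2)) (t2 - t1) then
    (if Rle_dec (PI / 4) t1 then (1%Z, 2%Z)
     else if Rle_dec (atan (1/2)) t1 then (1%Z, 1%Z)
     else (2%Z, 1%Z))
  else
    (if Rle_dec t2 (PI / 4) then (d, Zfloor (tan t1 * IZR d + 1))
     else if Rlt_dec t1 (PI / 4) then (1%Z, 1%Z)
     else (Zfloor (tan (PI / 2 - t2) * IZR d + 1), d)).

(* Point rule P_2 (for 0 <= b1 < b2 <= PI). *)
Definition P2 (b1 b2 : R) : pt :=
  if Rle_dec b2 (PI / 2) then P1 b1 b2
  else if Rlt_dec b1 (PI / 2) then (0%Z, 1%Z)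
  else let q := P1 (PI - b2) (PI - b1) in ((- fst q)%Z, snd q).

(* In the first quadrant, P_1 either returns one of the points (1,1), (1,2),
   (2,1), whose slopes pi/4 and pi/2 -+ atan(1/2) are compared with the angles
   using Machin's formula pi/4 = atan(1/2) + atan(1/3), or a point (d, y) with
   d = ceil(1/h), h = theta_2 - theta_1, and y = floor(d tan theta_1 + 1).  Then
   tan theta_1 < y/d <= tan theta_1 + 1/d <= tan theta_1 + h, and since atan is
   1-Lipschitz (strictly, away from 0) the slope atan(y/d) lies strictly between
   theta_1 and theta_2.  The last case of P_1 is the same construction after
   exchanging the axes, and P_2 reduces to P_1 by the reflection x -> -x. *)
From Stdlib Require Import Reals ZArith Lra Lia.
Open Scope R_scope.

Lemma Zfloor_bounds (x : R) : IZR (Zfloor x) <= x < IZR (Zfloor x) + 1.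
Proof.
  unfold Zfloor. rewrite minus_IZR. destruct (archimed x). simpl. lra.
Qed.

Lemma Zceil_bounds (x : R) : x <= IZR (Zceil x) < x + 1.
Proof.
  unfold Zceil. rewrite opp_IZR. destruct (Zfloor_bounds (- x)). lra.
Qed.

Lemma atan_sub_lt (a b : R) : 0 <= a -> a < b -> atan b - atan a < b - a.
Proof.
  intros Ha Hab.
  destruct (MVT_cor2 atan (fun x => / (1 + x ^ 2)) a b Hab) as [c [-> Hc]].
  { intros c _. apply derivable_pt_lim_atan. }
  assert (Hinv : / (1 + c ^ 2) < 1).
  { rewrite <- Rinv_1. apply Rinv_lt_contravar; nra. }
  nra.
Qed.

Lemma atan_half_bounds : 0 < atan (1/2) < PI / 4 /\ PI / 4 < 2 * atan (1/2).
Proof.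
  replace (1/2) with (/2) by field.
  assert (0 < atan (/2)) by (rewrite <- atan_0; apply atan_increasing; lra).
  assert (atan (/2) < PI / 4) by (rewrite <- atan_1; apply atan_increasing; lra).
  assert (atan (/3) < atan (/2)) by (apply atan_increasing; lra).
  pose proof Machin_2_3. lra.
Qed.

Definition cone_between (p : pt) (t1 t2 : R) : Prop :=
  (0 < fst p)%Z /\ (0 < snd p)%Z /\ t1 < atan (IZR (snd p) / IZR (fst p)) < t2.

Lemma cone_between_swap (x y : Z) (t1 t2 : R) :
  cone_between (x, y) (PI / 2 - t2) (PI / 2 - t1) -> cone_between (y, x) t1 t2.
Proof.
  unfold cone_between; simpl. intros (Hx & Hy & Hlt).
  split; [exact Hy | split; [exact Hx |]].
  apply IZR_lt in Hx, Hy.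
  replace (IZR x / IZR y) with (/ (IZR y / IZR x)) by (field; lra).
  rewrite atan_inv by (apply Rdiv_lt_0_compat; lra).
  lra.
Qed.

Lemma cone_between_one_one (t1 t2 : R) :
  t1 < PI / 4 < t2 -> cone_between (1%Z, 1%Z) t1 t2.
Proof.
  intros H. unfold cone_between; simpl.
  replace (1 / 1) with 1 by field. rewrite atan_1.
  repeat split; try lia; lra.
Qed.

Lemma cone_between_two_one (t1 t2 : R) :
  t1 < atan (1/2) < t2 -> cone_between (2%Z, 1%Z) t1 t2.
Proof.
  intros H. unfold cone_between; simpl. repeat split; try lia; lra.
Qed.

Lemma ceil_floor_approx (u h : R) : 0 <= u -> 0 < h ->
  let d := Zceil (1 / h) in let y := Zfloor (u * IZR d + 1) in
  (0 < d)%Z /\ (0 < y)%Z /\ u < IZR y / IZR d <= u + h.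
Proof.
  intros Hu Hh d y.
  pose proof (Zceil_bounds (1 / h)) as Hd. fold d in Hd.
  pose proof (Zfloor_bounds (u * IZR d + 1)) as Hy. fold y in Hy.
  assert (Hh' : 0 < 1 / h) by (apply Rdiv_lt_0_compat; lra).
  assert (HD : 0 < IZR d) by lra.
  assert (HY : u * IZR d < IZR y) by lra.
  assert (HY0 : 0 < IZR y) by nra.
  split; [apply lt_IZR; exact HD |].
  split; [apply lt_IZR; exact HY0 |].
  assert (Hinv : / IZR d <= h).
  { replace h with (/ (1 / h)) by (field; lra). apply Rinv_le_contravar; lra. }
  split.
  - apply (Rmult_lt_reg_r (IZR d)); [exact HD |].
    replace (IZR y / IZR d * IZR d) with (IZR y) by (field; lra). lra.
  - apply Rle_trans with (u + / IZR d); [| lra].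
    apply (Rmult_le_reg_r (IZR d)); [exact HD |].
    replace (IZR y / IZR d * IZR d) with (IZR y) by (field; lra).
    replace ((u + / IZR d) * IZR d) with (u * IZR d + 1) by (field; lra).
    lra.
Qed.

Lemma cone_between_ceil_floor (t h : R) : 0 <= t < PI / 2 -> 0 < h ->
  let d := Zceil (1 / h) in
  cone_between (d, Zfloor (tan t * IZR d + 1)) t (t + h).
Proof.
  intros Ht Hh d.
  assert (Htan : 0 <= tan t).
  { destruct (proj1 Ht) as [Hpos | <-].
    - left. apply tan_gt_0; lra.
    - rewrite tan_0. lra. }
  destruct (ceil_floor_approx (tan t) h Htan Hh) as (Hd & Hy & Hlow & Hup).
  unfold cone_between; simpl. fold d in Hd, Hy, Hlow, Hup |- *.
  split; [exact Hd | split; [exact Hy |]].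
  pose proof (atan_sub_lt _ _ Htan Hlow) as Hlip.
  rewrite atan_tan in Hlip by lra.
  split; [| lra].
  rewrite <- (atan_tan t) at 1 by lra. now apply atan_increasing.
Qed.

Lemma P1_cone_between (t1 t2 : R) : 0 <= t1 -> t1 < t2 -> t2 <= PI / 2 ->
  cone_between (P1 t1 t2) t1 t2.
Proof.
  intros H0 H12 H2.
  destruct atan_half_bounds as [[Ha0 Ha1] Ha2].
  pose proof PI_RGT_0.
  unfold P1.
  destruct (Rlt_dec (PI / 4) (t2 - t1)).
  { apply cone_between_one_one; lra. }
  destruct (Rlt_dec (atan (1/2)) (t2 - t1)).
  { destruct (Rle_dec (PI / 4) t1).
    { apply cone_between_swap, cone_between_two_one; lra. }
    destruct (Rle_dec (atan (1/2)) t1).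
    { apply cone_between_one_one; lra. }
    apply cone_between_two_one; lra. }
  destruct (Rle_dec t2 (PI / 4)).
  { pose proof (cone_between_ceil_floor t1 (t2 - t1)) as C.
    replace (t1 + (t2 - t1)) with t2 in C by ring.
    apply C; lra. }
  destruct (Rlt_dec t1 (PI / 4)).
  { apply cone_between_one_one; lra. }
  apply cone_between_swap.
  pose proof (cone_between_ceil_floor (PI / 2 - t2) (t2 - t1)) as C.
  replace (PI / 2 - t2 + (t2 - t1)) with (PI / 2 - t1) in C by ring.
  apply C; lra.
Qed.

Lemma is_slope_atan (x y : Z) : (0 < x)%Z -> (0 < y)%Z ->
  is_slope (x, y) (atan (IZR y / IZR x)).
Proof.
  intros Hx Hy. apply IZR_lt in Hx, Hy.
  unfold is_slope; simpl fst; simpl snd; cbv zeta.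
  set (X := IZR x) in *. set (Y := IZR y) in *. set (u := Y / X).
  assert (Hu : 0 < u) by (apply Rdiv_lt_0_compat; lra).
  assert (Hnorm : sqrt (X ^ 2 + Y ^ 2) = X * sqrt (1 + u²)).
  { replace (X ^ 2 + Y ^ 2) with (X² * (1 + u²)) by (unfold u, Rsqr; field; lra).
    rewrite sqrt_mult by (pose proof (Rle_0_sqr u); pose proof (Rle_0_sqr X); lra).
    rewrite sqrt_Rsqr; lra. }
  assert (0 < sqrt (1 + u²)) by (apply sqrt_lt_R0; pose proof (Rle_0_sqr u); lra).
  assert (0 < atan u) by (rewrite <- atan_0; now apply atan_increasing).
  pose proof (atan_bound u). pose proof PI_RGT_0.
  split; [lra |].
  rewrite Hnorm, cos_atan, sin_atan.
  split.
  - field. lra.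
  - unfold u in *. field. lra.
Qed.

Lemma is_slope_opp_fst (x y : Z) (theta : R) : theta <= PI ->
  is_slope (x, y) theta -> is_slope ((- x)%Z, y) (PI - theta).
Proof.
  unfold is_slope; simpl fst; simpl snd; cbv zeta.
  intros Hpi ([H0 H2pi] & Hx & Hy). rewrite opp_IZR.
  replace ((- IZR x) ^ 2) with (IZR x ^ 2) by ring.
  rewrite Rtrigo_facts.cos_pi_minus, sin_PI_x.
  pose proof PI_RGT_0. split; [lra |]. split; lra.
Qed.

Lemma is_slope_vertical : is_slope (0%Z, 1%Z) (PI / 2).
Proof.
  unfold is_slope; simpl fst; simpl snd; cbv zeta.
  rewrite cos_PI2, sin_PI2.
  replace (IZR 0 ^ 2 + IZR 1 ^ 2) with 1 by (simpl; ring). rewrite sqrt_1.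
  pose proof PI_RGT_0. simpl. lra.
Qed.

Lemma cone_between_slope (x y : Z) (t1 t2 : R) : cone_between (x, y) t1 t2 ->
  (x, y) <> (0%Z, 0%Z) /\ exists theta, is_slope (x, y) theta /\ t1 < theta < t2.
Proof.
  intros (Hx & Hy & Hlt); simpl in *.
  split; [intros E; injection E; lia |].
  exists (atan (IZR y / IZR x)). split; [now apply is_slope_atan | exact Hlt].
Qed.

Lemma cone_between_reflect_slope (x y : Z) (t1 t2 : R) : 0 <= t1 ->
  cone_between (x, y) (PI - t2) (PI - t1) ->
  ((- x)%Z, y) <> (0%Z, 0%Z) /\
  exists theta, is_slope ((- x)%Z, y) theta /\ t1 < theta < t2.
Proof.
  intros H0 C. destruct (cone_between_slope x y _ _ C) as [_ [theta [Hs Hlt]]].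
  destruct C as (Hx & _). simpl in Hx.
  split; [intros E; injection E; lia |].
  exists (PI - theta). split; [apply is_slope_opp_fst; [lra | exact Hs] | lra].
Qed.

Theorem lemma9 (b1 b2 : R) (h0 : 0 <= b1) (h12 : b1 < b2) (h2 : b2 <= PI) :
  P2 b1 b2 <> (0%Z, 0%Z) /\
  exists theta, is_slope (P2 b1 b2) theta /\ b1 < theta < b2.
Proof.
  pose proof PI_RGT_0.
  unfold P2.
  destruct (Rle_dec b2 (PI / 2)).
  { pose proof (P1_cone_between b1 b2 h0 h12 r) as C.
    destruct (P1 b1 b2). now apply cone_between_slope. }
  destruct (Rlt_dec b1 (PI / 2)).
  { split; [discriminate |].
    exists (PI / 2). split; [exact is_slope_vertical | lra]. }
  assert (C : cone_between (P1 (PI - b2) (PI - b1)) (PI - b2) (PI - b1))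
    by (apply P1_cone_between; lra).
  destruct (P1 (PI - b2) (PI - b1)). now apply cone_between_reflect_slope.
Qed.
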